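(* Let $R\ge1$, $\mathbf{x}$ a vector of pairwise distinct reals, $\mathbf{c}\in\mathbb{R}^R$, $B=B(\mathbf{x},\mathbf{c})$, and let $\mathbf{u}=\mathbf{v}+i\mathbf{w}$ (with $\mathbf{v},\mathbf{w}\in\mathbb{R}^R$) be an eigenvector of $B$ for the eigenvalue $i\mu$, $\mu\in\mathbb{R}$. Then for every $1\le n\le R$, $$\mu^2v_n^2=\sum_{m=1}^R b_{n,m}^2w_m^2+2c_n^2\sum_{\substack{1\le m\le R\\ m\ne n}} a_{n,m}\,w_m\,(\mu v_m-b_{m,n}w_n).$$ Moreover, if $\mu\ne0$ then $\Vert\mathbf{v}\Vert=\Vert\mathbf{w}\Vert$; if $\mu=0$ then $\det B=0$ and the kernel of $B$ contains a nonzero real vector.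
   Context: $a_{m,m}=0$ and $a_{m,n}=\frac{1}{x_m-x_n}$ for $m\ne n$; $B(\mathbf{x},\mathbf{c})$ is the $R\times R$ matrix with entries $b_{m,n}=c_mc_na_{m,n}$. $\Vert\cdot\Vert$ is the Euclidean norm. *)

(* Complex numbers are modelled by an arbitrary
   numClosedFieldType C (e.g. algebraically closed field with conjugation,
   containing the reals as its Num.real elements). *)
From HB Require Import structures.
From mathcomp Require Import all_boot all_order all_algebra.
Set Implicit Arguments. Unset Strict Implicit. Unset Printing Implicit Defensive.
Import Order.TTheory GRing.Theory Num.Theory.
Local Open Scope ring_scope.

Definition Amat (C : numClosedFieldType) (r : nat) (x : 'I_r -> C) : 'M[C]_r :=
  \matrix_(m < r, n < r) (if m == n then 0 else (x m - x n)^-1).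

Definition Bmat (C : numClosedFieldType) (r : nat) (x c : 'I_r -> C) : 'M[C]_r :=
  \matrix_(m < r, n < r) (c m * c n * Amat x m n).

Definition enorm (C : numClosedFieldType) (r : nat) (v : 'I_r -> C) : C :=
  sqrtC (\sum_(m < r) `|v m| ^+ 2).

From HB Require Import structures.
From mathcomp Require Import all_boot all_order all_algebra.
From mathcomp Require Import ring.
Import Order.TTheory GRing.Theory Num.Theory.
Set Implicit Arguments. Unset Strict Implicit. Unset Printing Implicit Defensive.
Local Open Scope ring_scope.

(* B = B(x,c) is a real skew-symmetric matrix.  Splitting B u = i mu u into
   real and imaginary parts gives the two real systems B v = -mu w and
   B w = mu v, which drive all three claims.
   - The row identity: mu v_n = (B w)_n, so mu^2 v_n^2 = (sum_m b_nm w_m)^2.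
     Expanding the square, the off-diagonal products b_nm b_nk (m, k, n
     distinct) are rewritten with the Cauchy-type identity
       a_nm a_mk + a_nk a_km = a_nm a_nk,
     which turns the double sum into 2 c_n^2 sum_m a_nm w_m ((B w)_m - b_mn w_n);
     this is the lemma [row_square_expansion], valid for every vector w.
   - Equal norms: by skew-symmetry  v^T B w = - w^T B v, i.e.
     mu |v|^2 = mu |w|^2, and mu <> 0 can be cancelled.
   - mu = 0: B u = 0 with u <> 0 makes B singular, and the real or the
     imaginary part of u is a nonzero real kernel vector. *)

Section RealMatrix.
Variables (C : numClosedFieldType) (r : nat) (M : 'M[C]_r).

Lemma eigen_row n (u : 'cV[C]_r) (lam : C) :
  M *m u = lam *: u -> \sum_j M n j * u j 0 = lam * u n 0.
Proof. by move/(congr1 (fun N : 'cV[C]_r => N n 0)); rewrite !mxE. Qed.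

Lemma mulmx_col_eq0 (f : 'I_r -> C) :
  (forall n, \sum_j M n j * f j = 0) -> M *m (\col_i f i) = 0.
Proof.
move=> Hf; apply/matrixP => i j; rewrite !mxE -[RHS](Hf i).
by apply: eq_bigr => k _; rewrite mxE.
Qed.

Lemma det_eq0_of_kernel (u : 'cV[C]_r) : u != 0 -> M *m u = 0 -> \det M = 0.
Proof.
move=> u0 Mu0; apply/eqP; rewrite -[_ == 0]negbK -unitfE -unitmxE.
apply: contra u0 => Munit; by rewrite -(mulKmx Munit u) Mu0 mulmx0.
Qed.

Hypothesis M_real : forall i j, M i j \is Num.real.

Lemma eigen_Re (u : 'cV[C]_r) (mu : C) n : mu \is Num.real ->
  M *m u = ('i * mu) *: u ->
  \sum_j M n j * 'Re (u j 0) = - (mu * 'Im (u n 0)).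
Proof.
move=> muR /(eigen_row n)/(congr1 (fun z => 'Re z)).
rewrite raddf_sum -mulrA ReMil (ImMl muR) => <-.
by apply: eq_bigr => j _; rewrite -(ReMl (M_real n j)).
Qed.

Lemma eigen_Im (u : 'cV[C]_r) (mu : C) n : mu \is Num.real ->
  M *m u = ('i * mu) *: u ->
  \sum_j M n j * 'Im (u j 0) = mu * 'Re (u n 0).
Proof.
move=> muR /(eigen_row n)/(congr1 (fun z => 'Im z)).
rewrite raddf_sum -mulrA ImMil (ReMl muR) => <-.
by apply: eq_bigr => j _; rewrite -(ImMl (M_real n j)).
Qed.

(* A nonzero kernel vector of a real matrix yields a nonzero real one:
   its real part, or else its imaginary part. *)
Lemma real_kernel_vector (u : 'cV[C]_r) : u != 0 -> M *m u = 0 ->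
  exists z : 'cV[C]_r,
    z != 0 /\ (forall i, z i 0 \is Num.real) /\ M *m z = 0.
Proof.
move=> u0 Mu0.
have Mu : M *m u = ('i * 0) *: u by rewrite Mu0 mulr0 scale0r.
have [Re0|Re_neq0] := eqVneq (\col_i 'Re (u i 0)) 0; last first.
  exists (\col_i 'Re (u i 0)); split=> //; split; first by move=> i; rewrite mxE.
  by apply: mulmx_col_eq0 => n; rewrite (eigen_Re n (rpred0 _) Mu) mul0r oppr0.
exists (\col_i 'Im (u i 0)); split; last split.
- apply: contra u0 => /eqP Im0; apply/eqP/matrixP => i j; rewrite ord1 mxE.
  move: (congr1 (fun N : 'cV[C]_r => N i 0) Re0).
  move: (congr1 (fun N : 'cV[C]_r => N i 0) Im0); rewrite !mxE => Im_i Re_i.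
  by rewrite (Crect (u i 0)) Re_i Im_i mulr0 addr0.
- by move=> i; rewrite mxE.
- by apply: mulmx_col_eq0 => n; rewrite (eigen_Im n (rpred0 _) Mu) mul0r.
Qed.

End RealMatrix.

Section SkewMatrix.
Variables (C : numClosedFieldType) (r : nat) (M : 'M[C]_r).
Hypothesis M_skew : forall i j, M j i = - M i j.

Lemma skew_form_antisym (f g : 'I_r -> C) :
  \sum_i f i * (\sum_j M i j * g j) = - \sum_i g i * (\sum_j M i j * f j).
Proof.
under eq_bigr => i _ do rewrite big_distrr /=.
under [in RHS]eq_bigr => i _ do rewrite big_distrr /=.
rewrite exchange_big -sumrN; apply: eq_bigr => j _.
by rewrite -sumrN; apply: eq_bigr => i _; rewrite (M_skew i j); ring.
Qed.

Lemma skew_pair_sqnorm (v w : 'I_r -> C) (mu : C) : mu != 0 ->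
  (forall n, \sum_j M n j * v j = - (mu * w n)) ->
  (forall n, \sum_j M n j * w j = mu * v n) ->
  \sum_n v n ^+ 2 = \sum_n w n ^+ 2.
Proof.
move=> mu0 Mv Mw; apply: (mulfI mu0); rewrite !mulr_sumr.
transitivity (\sum_n v n * (\sum_j M n j * w j)).
  by apply: eq_bigr => i _; rewrite Mw; ring.
rewrite skew_form_antisym -sumrN; apply: eq_bigr => i _; rewrite Mv; ring.
Qed.

End SkewMatrix.

Lemma enorm_real (C : numClosedFieldType) (r : nat) (v : 'I_r -> C) :
  (forall i, v i \is Num.real) -> enorm v = sqrtC (\sum_i v i ^+ 2).
Proof. by move=> vR; congr sqrtC; apply: eq_bigr => i _; rewrite real_normK. Qed.

Section CauchyMatrix.
Variables (C : numClosedFieldType) (r : nat) (x c : 'I_r -> C).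

Lemma AmatE i j : Amat x i j = if i == j then 0 else (x i - x j)^-1.
Proof. by rewrite mxE. Qed.

Lemma BmatE i j : Bmat x c i j = c i * c j * Amat x i j.
Proof. by rewrite mxE. Qed.

Lemma Amat_diag i : Amat x i i = 0.
Proof. by rewrite AmatE eqxx. Qed.

Lemma Bmat_diag i : Bmat x c i i = 0.
Proof. by rewrite BmatE Amat_diag mulr0. Qed.

Lemma Amat_skew i j : Amat x j i = - Amat x i j.
Proof.
rewrite !AmatE eq_sym; case: eqP => _; first by rewrite oppr0.
by rewrite -invrN opprB.
Qed.

Lemma Bmat_skew i j : Bmat x c j i = - Bmat x c i j.
Proof. by rewrite !BmatE Amat_skew; ring. Qed.

Lemma Bmat_real : (forall i, x i \is Num.real) -> (forall i, c i \is Num.real) ->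
  forall i j, Bmat x c i j \is Num.real.
Proof.
move=> xR cR i j; rewrite BmatE AmatE !rpredM //.
by case: eqP => _; rewrite ?rpred0 // rpredV rpredB.
Qed.

Hypothesis x_inj : injective x.

Lemma x_sub_neq0 i j : i != j -> x i - x j != 0.
Proof. by move=> ij; rewrite subr_eq0; apply: contra ij => /eqP/x_inj ->. Qed.

Lemma Amat_cocycle n m k : n != m -> m != k -> n != k ->
  Amat x n m * Amat x m k + Amat x n k * Amat x k m = Amat x n m * Amat x n k.
Proof.
move=> nm mk nk; have km : k != m by rewrite eq_sym.
rewrite !AmatE (negbTE nm) (negbTE mk) (negbTE nk) (negbTE km).
by field; rewrite ?x_sub_neq0.
Qed.

(* Half of an off-diagonal cross term of (sum_m b_nm w_m)^2:
   cross w n m k = c_n^2 a_nm b_mk w_m w_k, with the term k = n dropped. *)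
Definition cross (w : 'I_r -> C) n m k : C :=
  if k == n then 0 else c n ^+ 2 * Amat x n m * Bmat x c m k * w m * w k.

Lemma Bmat_row_product (w : 'I_r -> C) n m k :
  Bmat x c n m * Bmat x c n k * w m * w k =
  (if k == m then Bmat x c n m ^+ 2 * w m ^+ 2 else 0)
  + cross w n m k + cross w n k m.
Proof.
rewrite /cross; have [->|km] := eqVneq k m.
  by rewrite Bmat_diag; case: (m == n); ring.
have [m_eq_n|mn] := eqVneq m n.
  by subst m; rewrite ?eqxx ?(negbTE km) !Bmat_diag Amat_diag; ring.
have [k_eq_n|kn] := eqVneq k n.
  by subst k; rewrite ?eqxx ?(negbTE mn) !Bmat_diag Amat_diag; ring.
rewrite !BmatE.
transitivity (c n ^+ 2 * c m * c k * w m * w k * (Amat x n m * Amat x n k)).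
  by ring.
rewrite -Amat_cocycle 1?eq_sym // 1?eq_sym // Amat_skew; ring.
Qed.

Lemma cross_row_sum (w : 'I_r -> C) n m :
  \sum_k cross w n m k
  = c n ^+ 2 * (Amat x n m * w m
                * (\sum_k Bmat x c m k * w k - Bmat x c m n * w n)).
Proof.
rewrite (bigD1 n) //= [X in X - _](bigD1 n) //= /cross eqxx add0r addrC addrK.
rewrite !mulr_sumr; apply: eq_bigr => k /negbTE ->; ring.
Qed.

Lemma row_square_expansion (w : 'I_r -> C) n :
  (\sum_m Bmat x c n m * w m) ^+ 2
  = \sum_m Bmat x c n m ^+ 2 * w m ^+ 2
    + 2 * c n ^+ 2 * \sum_(m | m != n) Amat x n m * w m
                        * (\sum_k Bmat x c m k * w k - Bmat x c m n * w n).
Proof.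
have diag : \sum_m \sum_k (if k == m then Bmat x c n m ^+ 2 * w m ^+ 2 else 0)
            = \sum_m Bmat x c n m ^+ 2 * w m ^+ 2.
  apply: eq_bigr => m _; rewrite (bigD1 m) //= eqxx big1 ?addr0 //.
  by move=> k /negbTE ->.
have crosses : \sum_m \sum_k cross w n m k
    = c n ^+ 2 * \sum_(m | m != n) Amat x n m * w m
                   * (\sum_k Bmat x c m k * w k - Bmat x c m n * w n).
  rewrite (bigD1 n) //= cross_row_sum Amat_diag !mul0r mulr0 add0r.
  by rewrite mulr_sumr; apply: eq_bigr => m _; rewrite cross_row_sum mulrA.
rewrite expr2 big_distrl /=.
under eq_bigr => m _ do rewrite big_distrr /=.
under eq_bigr => m _ do under eq_bigr => k _ do
  rewrite mulrACA !mulrA Bmat_row_product.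
under eq_bigr => m _ do rewrite !big_split /=.
rewrite !big_split /= diag.
rewrite (exchange_big _ _ _ _ _ (fun m k => cross w n k m)) /= crosses; ring.
Qed.

End CauchyMatrix.

Theorem lemma6 (C : numClosedFieldType) (r : nat) (x c : 'I_r -> C)
    (u : 'cV[C]_r) (mu : C) :
  (0 < r)%N ->
  injective x ->
  (forall i, x i \is Num.real) ->
  (forall i, c i \is Num.real) ->
  mu \is Num.real ->
  u != 0 ->
  Bmat x c *m u = ('i * mu) *: u ->
  let v := fun m => 'Re (u m 0) in
  let w := fun m => 'Im (u m 0) in
  (forall n : 'I_r,
      mu ^+ 2 * v n ^+ 2
      = \sum_(m < r) (Bmat x c n m) ^+ 2 * w m ^+ 2
        + 2 * c n ^+ 2 * \sum_(m < r | m != n)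
              Amat x n m * w m * (mu * v m - Bmat x c m n * w n))
  /\ (mu != 0 -> enorm v = enorm w)
  /\ (mu = 0 -> \det (Bmat x c) = 0 /\
        exists z : 'cV[C]_r, z != 0 /\ (forall i, z i 0 \is Num.real)
                              /\ Bmat x c *m z = 0).
Proof.
move=> _ x_inj xR cR muR u0 Bu v w.
have BR := Bmat_real xR cR.
have Bv n : \sum_j Bmat x c n j * v j = - (mu * w n) := eigen_Re BR n muR Bu.
have Bw n : \sum_j Bmat x c n j * w j = mu * v n := eigen_Im BR n muR Bu.
split; [|split].
- move=> n; rewrite -exprMn -Bw row_square_expansion //.
  by congr (_ + 2 * _ * _); apply: eq_bigr => m _; rewrite Bw.
- move=> mu0; have vR i : v i \is Num.real by exact: Creal_Re.
  have wR i : w i \is Num.real by exact: Creal_Im.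
  by rewrite !enorm_real // (skew_pair_sqnorm (@Bmat_skew C r x c) mu0 Bv Bw).
- move=> mu0; have Bu0 : Bmat x c *m u = 0 by rewrite Bu mu0 mulr0 scale0r.
  by split; [exact: det_eq0_of_kernel u0 Bu0 | exact (real_kernel_vector BR u0 Bu0)].
Qed.
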